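(* Let $A:[1,\infty)\to\mathbb R^{d\times d}$ be continuous with evolution family $T(t,s)$ for $x'=A(t)x$, and let $\|\cdot\|$ be a norm on $\mathbb R^d$. The following are equivalent: (1) $x'=A(t)x$ admits a nonuniform strong polynomial dichotomy; (2) there is a family of norms $\mathcal S=\{\|\cdot\|_t;\ t\ge1\}$ on $\mathbb R^d$ such that $x'=A(t)x$ admits a strong polynomial dichotomy with respect to $\mathcal S$ and there exist $C>0$, $\delta\ge0$ with $\|x\|\le\|x\|_t\le Ct^\delta\|x\|$ for all $x\in\mathbb R^d$, $t\ge1$.
   Context: Nonuniform strong polynomial dichotomy: there exist $K>0$, $a\ge\lambda>0$, $\varepsilon\ge0$ and projections $P(t)$, $t\ge1$, with $P(t)T(t,s)=T(t,s)P(s)$ for $t\ge s\ge1$ and, for $t\ge s\ge1$, $Q(t)=\mathrm{Id}-P(t)$: $\|T(t,s)P(s)\|\le K(t/s)^{-\lambda}s^\varepsilon$, $\|T(s,t)Q(t)\|\le K(t/s)^{-\lambda}t^\varepsilon$, $\|T(t,s)\|\le K(t/s)^as^\varepsilon$, $\|T(s,t)\|\le K(t/s)^at^\varepsilon$. Strong polynomial dichotomy w.r.t. $\{\|\cdot\|_t\}$: there exist $K>0$, $a\ge\lambda>0$ and projections $P(t)$ with $P(t)T(t,s)=T(t,s)P(s)$ and, for $t\ge s\ge1$, $x\in\mathbb R^d$: $\|T(t,s)P(s)x\|_t\le K(t/s)^{-\lambda}\|x\|_s$, $\|T(s,t)Q(t)x\|_s\le K(t/s)^{-\lambda}\|x\|_t$,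 $\|T(t,s)x\|_t\le K(t/s)^a\|x\|_s$, $\|T(s,t)x\|_s\le K(t/s)^a\|x\|_t$. *)

From HB Require Import structures.
From mathcomp Require Import all_boot all_order all_algebra.
From mathcomp Require Import all_classical all_reals all_analysis.
Set Implicit Arguments. Unset Strict Implicit. Unset Printing Implicit Defensive.
Import Order.TTheory GRing.Theory Num.Theory.
Import numFieldNormedType.Exports.
Local Open Scope classical_set_scope.
Local Open Scope ring_scope.

Definition is_norm (R : realType) (d : nat) (N : 'cV[R]_d -> R) : Prop :=
  [/\ forall x, 0 <= N x,
      forall x, N x = 0 -> x = 0,
      forall (a : R) x, N (a *: x) = `|a| * N x
    & forall x y, N (x + y) <= N x + N y].

Definition opnorm (R : realType) (d : nat) (N : 'cV[R]_d -> R) (M : 'M[R]_d) : R :=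
  sup [set N (M *m x) | x in [set x : 'cV[R]_d | N x <= 1]].

Definition evolution_family (R : realType) (d : nat)
    (A : R -> 'M[R]_d) (T : R -> R -> 'M[R]_d) : Prop :=
  [/\ forall s, 1 <= s -> T s s = 1%:M,
      forall s, 1 <= s -> {within `[1, +oo[, continuous (fun t => T t s)}
    & forall s t : R, 1 <= s -> 1 < t ->
        @is_derive R R _ t (1 : R) (fun u => T u s) (A t *m T t s)].

Definition invariant_projections (R : realType) (d : nat)
    (T : R -> R -> 'M[R]_d) (P : R -> 'M[R]_d) : Prop :=
  (forall t, 1 <= t -> P t *m P t = P t) /\
  (forall t s, 1 <= s -> s <= t -> P t *m T t s = T t s *m P s).

Definition nonuniform_strong_poly_dichotomy (R : realType) (d : nat)
    (N : 'cV[R]_d -> R) (T : R -> R -> 'M[R]_d) : Prop :=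
  exists (K a lam eps : R) (P : R -> 'M[R]_d),
    [/\ 0 < K, 0 < lam, lam <= a, 0 <= eps /\
        invariant_projections T P &
        forall t s, 1 <= s -> s <= t ->
        [/\ opnorm N (T t s *m P s) <= K * (t / s) `^ (- lam) * s `^ eps,
            opnorm N (T s t *m (1%:M - P t)) <= K * (t / s) `^ (- lam) * t `^ eps,
            opnorm N (T t s) <= K * (t / s) `^ a * s `^ eps &
            opnorm N (T s t) <= K * (t / s) `^ a * t `^ eps]].

Definition strong_poly_dichotomy_wrt (R : realType) (d : nat)
    (Nt : R -> 'cV[R]_d -> R) (T : R -> R -> 'M[R]_d) : Prop :=
  exists (K a lam : R) (P : R -> 'M[R]_d),
    [/\ 0 < K, 0 < lam, lam <= a /\
        invariant_projections T P &
        forall t s (x : 'cV[R]_d), 1 <= s -> s <= t ->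
        [/\ Nt t (T t s *m P s *m x) <= K * (t / s) `^ (- lam) * Nt s x,
            Nt s (T s t *m (1%:M - P t) *m x) <= K * (t / s) `^ (- lam) * Nt t x,
            Nt t (T t s *m x) <= K * (t / s) `^ a * Nt s x &
            Nt s (T s t *m x) <= K * (t / s) `^ a * Nt t x]].

(* For (2) -> (1) the operator norms are compared through
   ||x|| <= ||x||_t <= C t^delta ||x||.  For (1) -> (2) take the Lyapunov norm
     ||x||_t = sup_{tau >= 1} ||T(tau,t) P(t) x|| rho(tau/t)
             + sup_{sig >= 1} ||T(sig,t) Q(t) x|| rho(t/sig),
   rho(u) = min(u^lam, u^a).  The nonuniform bounds make it at most a multiple
   of t^(2 eps) ||x||, and tau = sig = t gives ||x|| <= ||x||_t.  Since
   rho(u) <= y^(-lam) rho(u y) and rho(u y) <= y^a rho(u) for y >= 1, the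
   cocycle identity T(tau,t) T(t,s) = T(tau,s) turns these weights into the
   dichotomy estimates with constant 1.  The cocycle identity comes from
   uniqueness for x' = A(t) x, itself a mean value argument on short intervals. *)

From HB Require Import structures.
From mathcomp Require Import all_boot all_order all_algebra.
From mathcomp Require Import all_classical all_reals all_analysis.
From mathcomp Require Import ring lra.
Import Order.TTheory GRing.Theory Num.Theory.
Import numFieldNormedType.Exports.
Local Open Scope classical_set_scope.
Local Open Scope ring_scope.
Set Implicit Arguments.
Unset Strict Implicit.
Unset Printing Implicit Defensive.

Section poly_weight.
Variable R : realType.
Implicit Types lam a u v x y r : R.

Lemma powRN_mul u r : 0 < u -> u `^ (- r) * u `^ r = 1.
Proof. by move=> u0; rewrite powRN mulVf // powR_eq0 negb_and gt_eqF. Qed.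

Lemma powR_mulV u r : 0 < u -> u `^ r * u^-1 `^ r = 1.
Proof. by move=> u0; rewrite -powRM ?invr_ge0 ?ltW // mulfV ?gt_eqF // powR1. Qed.

Lemma ler_pM_cancel (n c e w f : R) :
  0 <= c -> 0 <= e -> 0 <= w -> n <= c * e -> w <= f -> e * f = 1 -> n * w <= c.
Proof.
move=> c0 e0 w0 hn wf ef; apply: le_trans (ler_wpM2r w0 hn) _.
by rewrite -mulrA -[leRHS]mulr1 -ef ler_wpM2l // ler_wpM2l.
Qed.

Definition poly_weight lam a u := Num.min (u `^ lam) (u `^ a).

Lemma poly_weight_ge0 lam a u : 0 <= poly_weight lam a u.
Proof. by rewrite le_min !powR_ge0. Qed.

Lemma poly_weight1 lam a : poly_weight lam a 1 = 1.
Proof. by rewrite /poly_weight !powR1 minxx. Qed.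

Lemma poly_weight_supermul lam a u v : 0 <= u -> 0 <= v ->
  poly_weight lam a u * poly_weight lam a v <= poly_weight lam a (u * v).
Proof.
move=> u0 v0; rewrite /poly_weight le_min !powRM //.
by apply/andP; split; apply: ler_pM; rewrite ?le_min ?powR_ge0 ?ge_min ?lexx ?orbT.
Qed.

Lemma poly_weightE_ge1 lam a u : lam <= a -> 1 <= u -> poly_weight lam a u = u `^ lam.
Proof. by move=> la u1; apply/min_idPl; apply: ler_powR. Qed.

Lemma poly_weightE_le1 lam a u : lam <= a -> 0 < u <= 1 -> poly_weight lam a u = u `^ a.
Proof. by move=> la u01; apply/min_idPr; apply: ger_powR. Qed.

Lemma poly_weight_le_powRN lam a x y : lam <= a -> 0 <= x -> 1 <= y ->
  poly_weight lam a x <= y `^ (- lam) * poly_weight lam a (x * y).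
Proof.
move=> la x0 y1; have y0 : 0 < y by apply: lt_le_trans y1.
rewrite -[leLHS]mulr1 -(powRN_mul lam y0) mulrCA ler_wpM2l ?powR_ge0 //.
by rewrite -(poly_weightE_ge1 la y1) poly_weight_supermul // (ltW y0).
Qed.

Lemma poly_weight_mul_le_powR lam a x y : lam <= a -> 0 <= x -> 1 <= y ->
  poly_weight lam a (x * y) <= y `^ a * poly_weight lam a x.
Proof.
move=> la x0 y1; have y0 : 0 < y by apply: lt_le_trans y1.
have yV : 0 < y^-1 <= 1 by rewrite invr_gt0 y0 invf_le1.
rewrite -[leLHS]mul1r -(powR_mulV a y0) -mulrA ler_wpM2l ?powR_ge0 //.
rewrite -(poly_weightE_le1 la yV) mulrC.
apply: le_trans (poly_weight_supermul _ _ _ _) _.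
- by rewrite mulr_ge0 // ltW.
- by rewrite invr_ge0 ltW.
- by rewrite mulfK ?gt_eqF.
Qed.

Lemma poly_weight_div_ratio lam a s t u : lam <= a -> 0 < s <= t -> 0 <= u ->
  poly_weight lam a (u / t) <= (t / s) `^ (- lam) * poly_weight lam a (u / s) /\
  poly_weight lam a (u / s) <= (t / s) `^ a * poly_weight lam a (u / t).
Proof.
move=> la /andP[s0 st] u0; have t0 : 0 < t by apply: lt_le_trans st.
have ts1 : 1 <= t / s by rewrite ler_pdivlMr // mul1r.
have uts : u / t * (t / s) = u / s by rewrite mulrA divfK ?gt_eqF.
have ut0 : 0 <= u / t by rewrite divr_ge0 // ltW.
by rewrite -uts; split; [apply: poly_weight_le_powRN | apply: poly_weight_mul_le_powR].
Qed.

Lemma poly_weight_ratio_div lam a s t u : lam <= a -> 0 < s <= t -> 0 < u ->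
  poly_weight lam a (s / u) <= (t / s) `^ (- lam) * poly_weight lam a (t / u) /\
  poly_weight lam a (t / u) <= (t / s) `^ a * poly_weight lam a (s / u).
Proof.
move=> la /andP[s0 st] u0.
have ts1 : 1 <= t / s by rewrite ler_pdivlMr // mul1r.
have sut : s / u * (t / s) = t / u by rewrite mulrC mulrA divfK ?gt_eqF.
have su0 : 0 <= s / u by rewrite divr_ge0 // ltW.
by rewrite -sut; split; [apply: poly_weight_le_powRN | apply: poly_weight_mul_le_powR].
Qed.

Lemma powRN_le_powR r lam a : 1 <= r -> 0 <= lam -> 0 <= a -> r `^ (- lam) <= r `^ a.
Proof. by move=> r1 l0 a0; apply: ler_powR => //; apply: le_trans a0; rewrite oppr_le0. Qed.

End poly_weight.

Lemma mx_norm_entry_le {R : realType} {m n : nat} (M : 'M[R]_(m, n)) i j :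
  `|M i j| <= `|M|.
Proof. by rewrite [leRHS]/Num.Def.normr /= mx_normrE (le_bigmax _ _ (i, j)). Qed.

Section finite_dimensional_norm.
Variables (R : realType) (d : nat) (N : 'cV[R]_d -> R).
Hypothesis normN : is_norm N.

Lemma is_norm_ge0 x : 0 <= N x.
Proof. by have [+ _ _ _] := normN; apply. Qed.

Lemma is_norm_eq0 x : N x = 0 -> x = 0.
Proof. by have [_ + _ _] := normN; apply. Qed.

Lemma is_normZ (k : R) x : N (k *: x) = `|k| * N x.
Proof. by have [_ _ + _] := normN; apply. Qed.

Lemma is_norm_triangle x y : N (x + y) <= N x + N y.
Proof. by have [_ _ _ +] := normN; apply. Qed.

Lemma is_norm0 : N 0 = 0.
Proof. by rewrite -(scale0r (0 : 'cV[R]_d)) is_normZ normr0 mul0r. Qed.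

Lemma is_normN x : N (- x) = N x.
Proof. by rewrite -scaleN1r is_normZ normrN normr1 mul1r. Qed.

Lemma is_norm_gt0 x : x != 0 -> 0 < N x.
Proof.
by move=> x0; rewrite lt_neqAle is_norm_ge0 andbT; apply: contra x0 => /eqP/esym/is_norm_eq0->.
Qed.

Lemma is_norm_dist x y : `|N x - N y| <= N (x - y).
Proof.
have := is_norm_triangle (y - x) x; have := is_norm_triangle (x - y) y.
rewrite !subrK -opprB is_normN ler_norml => h1 h2; apply/andP; split; lra.
Qed.

Lemma is_norm_sum n (f : 'I_n -> 'cV[R]_d) :
  N (\sum_(i < n) f i) <= \sum_(i < n) N (f i).
Proof.
elim/big_rec2: _ => [|i y1 y2 _ IH]; first by rewrite is_norm0.
by apply: le_trans (is_norm_triangle _ _) _; rewrite lerD2l.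
Qed.

Lemma is_norm_mulmx_le (M : 'M[R]_d) x :
  N (M *m x) <= \sum_(i < d) `|x i 0| * N (M *m delta_mx i 0).
Proof.
have xE : x = \sum_(i < d) x i 0 *: delta_mx i 0.
  by rewrite {1}(matrix_sum_delta x); apply: eq_bigr => i _; rewrite big_ord1.
rewrite {1}xE mulmx_sumr; apply: le_trans (is_norm_sum _) _.
by apply: ler_sum => i _; rewrite -scalemxAr is_normZ.
Qed.

Lemma is_norm_trmx_le (v : 'rV[R]_d) :
  N v^T <= `|v| * \sum_(i < d) N (delta_mx i 0).
Proof.
rewrite mulr_sumr -[v^T]mul1mx; apply: le_trans (is_norm_mulmx_le _ _) _.
apply: ler_sum => i _; rewrite mul1mx ler_wpM2r ?is_norm_ge0 //.
by rewrite mxE mx_norm_entry_le.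
Qed.

Lemma is_norm_trmx_continuous : continuous (fun v : 'rV[R]_d => N v^T).
Proof.
move=> v; apply/(@cvgrPdist_le _ _ _ _ (nbhs_filter v)) => e e0.
set L := \sum_(i < d) N (delta_mx i 0).
have L0 : 0 <= L by apply: sumr_ge0 => i _; exact: is_norm_ge0.
have L1 : 0 < L + 1 by rewrite ltr_wpDl.
have eL0 : 0 < e / (L + 1) by rewrite divr_gt0.
apply: filterS (nbhsx_ballx v _ eL0) => w.
rewrite mx_norm_ball /ball_ /= => vw.
apply: le_trans (is_norm_dist _ _) _; rewrite -linearB /=.
apply: le_trans (is_norm_trmx_le _) _.
apply: le_trans (_ : e / (L + 1) * L <= e).
  by rewrite ler_wpM2r // ltW.
by rewrite mulrAC ler_pdivrMr // ler_pM2l // lerDl.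
Qed.

(* Minimise [N] on the compact unit sphere of the sup norm. *)
Lemma is_norm_ge_mx_norm : exists2 c, 0 < c & forall v : 'rV[R]_d, `|v| <= c * N v^T.
Proof.
pose S := [set v : 'rV[R]_d | `|v| = 1].
have normalize_in_S v : v != 0 -> `|v|^-1 *: v \in S.
  move=> v0; have vn : 0 < `|v| by rewrite normr_gt0.
  by rewrite inE /S /= normrZ ger0_norm ?invr_ge0 // mulVf ?gt_eqF.
have [S0|S_empty] := pselect (S !=set0); last first.
  exists 1 => // v; have [->|/normalize_in_S vS] := eqVneq v 0.
    by rewrite normr0 mul1r is_norm_ge0.
  by exfalso; apply: S_empty; exists (`|v|^-1 *: v); exact: set_mem.
have Sc : compact S.
  apply: bounded_closed_compact; first by exists 1; split => // r r1 v /= ->; exact: ltW.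
  apply: (@preimage_closed _ _ (fun v : 'rV[R]_d => `|v|) [set r | r = 1]).
    by move=> v _; apply: norm_continuous.
  exact: closed_eq.
have [v0 v0S v0min] :=
  compact_EVT_min S0 Sc (continuous_subspaceT is_norm_trmx_continuous).
have v0n0 : v0^T != 0.
  apply: contra_eqN (set_mem v0S) => /eqP/(congr1 trmx); rewrite trmxK trmx0 => ->.
  by rewrite normr0 eq_sym oner_eq0.
have Nv0 : 0 < N v0^T := is_norm_gt0 v0n0.
exists (N v0^T)^-1; first by rewrite invr_gt0.
move=> v; have [->|vn0] := eqVneq v 0; first by rewrite normr0 trmx0 is_norm0 mulr0.
have vn : 0 < `|v| by rewrite normr_gt0.
have /v0min := normalize_in_S _ vn0.
rewrite linearZ /= is_normZ ger0_norm ?invr_ge0 // => h.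
by rewrite mulrC ler_pdivlMr // -ler_pdivlMl.
Qed.

Lemma is_norm_entry_le :
  exists2 c, 0 < c & forall (x : 'cV[R]_d) i, `|x i 0| <= c * N x.
Proof.
have [c c0 hc] := is_norm_ge_mx_norm; exists c => // x i.
have := hc x^T; rewrite trmxK; apply: le_trans.
by have := mx_norm_entry_le x^T 0 i; rewrite mxE.
Qed.

Lemma opnorm_image_bounded (M : 'M[R]_d) :
  exists B, forall x, N x <= 1 -> N (M *m x) <= B.
Proof.
have [c c0 hc] := is_norm_entry_le.
pose L := \sum_(i < d) N (M *m delta_mx i 0).
have L0 : 0 <= L by apply: sumr_ge0 => i _; exact: is_norm_ge0.
exists (c * L) => x x1; apply: le_trans (is_norm_mulmx_le _ _) _.
rewrite mulr_sumr; apply: ler_sum => i _; rewrite ler_wpM2r ?is_norm_ge0 //.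
by apply: le_trans (hc x i) _; rewrite ler_piMr // ltW.
Qed.

Lemma opnorm_ub (M : 'M[R]_d) x : N (M *m x) <= opnorm N M * N x.
Proof.
have [B hB] := opnorm_image_bounded M.
have [->|x0] := eqVneq x 0; first by rewrite mulmx0 is_norm0 mulr0.
have Nx : 0 < N x := is_norm_gt0 x0.
have NxV : 0 <= (N x)^-1 by rewrite invr_ge0 ltW.
rewrite -ler_pdivrMr // mulrC -(ger0_norm NxV) -is_normZ scalemxAr.
apply: sup_upper_bound; last first.
  by exists ((N x)^-1 *: x) => //; rewrite /= is_normZ ger0_norm // mulVf ?gt_eqF.
split; first by exists (N (M *m 0)), 0 => //=; rewrite is_norm0 ler01.
by exists B => _ [y /= y1 <-]; exact: hB.
Qed.

Lemma opnorm_le (M : 'M[R]_d) (B : R) :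
  0 <= B -> (forall x, N (M *m x) <= B * N x) -> opnorm N M <= B.
Proof.
move=> B0 hB; apply: ge_sup; first by exists (N (M *m 0)), 0 => //=; rewrite is_norm0 ler01.
by move=> _ [x /= x1 <-]; apply: le_trans (hB x) _; rewrite ler_piMr.
Qed.

End finite_dimensional_norm.

Section linear_ode.
Variable R : realType.

Lemma within_continuous_entry {m n : nat} {D : set R} {M : R -> 'M[R]_(m, n)} :
  {within D, continuous M} -> forall i j, {within D, continuous (fun u => M u i j)}.
Proof.
move=> hM i j; apply/subspace_continuousP => x Dx.
apply: (continuous_cvg _ (@coord_continuous _ _ _ i j (M x))).
exact: (subspace_continuousP _ _).1 hM x Dx.
Qed.

Lemma is_derive_entry {m n : nat} {M : R -> 'M[R]_(m, n)} {t : R} {D : 'M[R]_(m, n)} :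
  is_derive t 1 M D -> forall i j, is_derive t 1 (fun u => M u i j) (D i j).
Proof.
case=> hd hv i j; apply: DeriveDef; first exact: (derivable_mxP M t 1).1 hd i j.
by rewrite -hv (derive_mx hd) mxE.
Qed.

Lemma MVT_abs_le (f df : R -> R) (a b B : R) :
  (forall x, x \in `]a, b[ -> is_derive x 1 f (df x)) ->
  {within `[a, b], continuous f} -> (forall x, x \in `[a, b] -> `|df x| <= B) ->
  {in `[a, b] &, forall x y, `|f y - f x| <= B * (b - a)}.
Proof.
move=> fd fc dfB x y xab yab.
wlog xy : x y xab yab / x <= y.
  by move=> H; case: (leP x y) => [|/ltW] h; [exact: H | rewrite distrC; exact: H].
move: xab yab; rewrite !in_itv /= => /andP[ax xb] /andP[ay yb].
have fd' z : z \in `]x, y[ -> is_derive z 1 f (df z).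
  rewrite in_itv /= => /andP[xz zy]; apply: fd; rewrite in_itv /=.
  by apply/andP; split; lra.
have fc' : {within `[x, y], continuous f}.
  apply: continuous_subspaceW fc => z /=; rewrite !in_itv /= => /andP[xz zy].
  by apply/andP; split; lra.
have [c] := MVT_segment xy fd' fc'.
rewrite in_itv /= => /andP[xc cy] ->.
rewrite normrM [`|y - x|]ger0_norm ?subr_ge0 //.
apply: ler_pM; rewrite ?subr_ge0 //; last lra.
by apply: dfB; rewrite in_itv /=; apply/andP; split; lra.
Qed.

Variable d : nat.
Implicit Types A X : R -> 'M[R]_d.

(* If [c] maximises the entrywise l1 norm [F] of [X] on the segment, the mean
   value theorem from the zero [p] gives [F c <= F c / 2]. *)
Lemma linear_ode_vanish_segment A X (a b p L : R) :
  a <= b -> p \in `[a, b] -> (forall u, u \in `[a, b] -> `|A u| <= L) ->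
  (b - a) * ((d * d)%:R * L) <= 2^-1 ->
  (forall i j, {within `[a, b], continuous (fun u => X u i j)}) ->
  (forall u, u \in `]a, b[ -> forall i j,
     is_derive u 1 (fun v => X v i j) ((A u *m X u) i j)) ->
  X p = 0 -> {in `[a, b], forall u, X u = 0}.
Proof.
move=> ab pab AL small Xc Xd Xp.
pose F u := \sum_(i < d) \sum_(j < d) `|X u i j|.
have F_ge0 u : 0 <= F u by apply: sumr_ge0 => i _; apply: sumr_ge0.
have col_le_F u j : \sum_(k < d) `|X u k j| <= F u.
  apply: ler_sum => k _.
  by rewrite (bigD1 j) //= lerDl; apply: sumr_ge0.
have entry_le_F u i j : `|X u i j| <= F u.
  by apply: le_trans (col_le_F u j); rewrite (bigD1 i) //= lerDl; apply: sumr_ge0.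
have Fc : {within `[a, b], continuous F}.
  apply/subspace_continuousP => v vab.
  apply: cvg_big => [|i _]; first exact: add_continuous.
  apply: cvg_big => [|j _]; first exact: add_continuous.
  by apply: cvg_norm; apply: (subspace_continuousP _ _).1 (Xc i j) v vab.
have [c cab Fmax] := EVT_max ab Fc.
have L0 : 0 <= L by apply: le_trans (AL _ pab).
have dX u i j : u \in `[a, b] -> `|(A u *m X u) i j| <= L * F c.
  move=> uab; rewrite mxE; apply: le_trans (ler_norm_sum _ _ _) _.
  apply: le_trans (_ : \sum_(k < d) L * `|X u k j| <= _).
    apply: ler_sum => k _; rewrite normrM ler_wpM2r //.
    exact: le_trans (mx_norm_entry_le _ _ _) (AL _ uab).
  by rewrite -mulr_sumr ler_wpM2l // (le_trans (col_le_F u j)) ?Fmax.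
have Xc_entry i j : `|X c i j| <= L * F c * (b - a).
  have -> : X c i j = X c i j - X p i j by rewrite Xp mxE subr0.
  exact: (MVT_abs_le (fun u uab => Xd u uab i j) (Xc i j) (fun u uab => dX u i j uab) pab cab).
have Fc_small : F c <= 2^-1 * F c.
  apply: le_trans (_ : \sum_(i < d) \sum_(j < d) (L * F c * (b - a)) <= _).
    by do 2 (apply: ler_sum => ? _); exact: Xc_entry.
  rewrite !sumr_const !card_ord -mulrnA -[_ *+ (d * d)]mulr_natr.
  rewrite (_ : _ * _ = (b - a) * ((d * d)%:R * L) * F c); last by ring.
  by rewrite ler_wpM2r.
have Fc0 : F c = 0 by apply/le_anti; rewrite F_ge0 andbT; lra.
move=> u uab; apply/matrixP => i j; rewrite mxE.
by apply/normr0_eq0/le_anti; rewrite normr_ge0 andbT -Fc0 (le_trans (entry_le_F u i j)) ?Fmax.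
Qed.

Lemma continuous_bounded_segment A (m : R) :
  {within `[1, +oo[, continuous A} -> exists L, forall u, u \in `[1, m] -> `|A u| <= L.
Proof.
move=> Ac; have [m1|m1] := leP 1 m; last first.
  by exists 0 => u; rewrite in_itv /= => /andP[u1 um]; lra.
have Amc : {within `[1, m], continuous (fun u => `|A u|)}.
  have sub : `[1, m] `<=` `[1, +oo[ by move=> u; rewrite /= !in_itv /= andbT => /andP[].
  apply/subspace_continuousP => u um; apply: cvg_norm.
  exact: (subspace_continuousP _ _).1 (continuous_subspaceW sub Ac) u um.
by have [c _ cmax] := EVT_max m1 Amc; exists `|A c|.
Qed.

Section vanishing.
Variables (A X : R -> 'M[R]_d).
Hypothesis X_continuous : forall i j, {within `[1, +oo[, continuous (fun u => X u i j)}.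
Hypothesis X_derive : forall u : R, 1 < u -> forall i j,
  is_derive u 1 (fun v => X v i j) ((A u *m X u) i j).

Lemma linear_ode_vanish_near (m L p v : R) :
  (forall u, u \in `[1, m] -> `|A u| <= L) -> 1 <= p <= m -> 1 <= v <= m ->
  `|v - p| * ((d * d)%:R * L) <= 2^-1 -> X p = 0 -> X v = 0.
Proof.
move=> AL /andP[p1 pm] /andP[v1 vm] small Xp.
have vanish a b : 1 <= a -> a <= b -> b <= m -> (b - a) * ((d * d)%:R * L) <= 2^-1 ->
    p \in `[a, b] -> {in `[a, b], forall w, X w = 0}.
  move=> a1 ab bm ab_small pab.
  have sub : `[a, b] `<=` `[1, +oo[.
    by move=> w; rewrite /= !in_itv /= andbT => /andP[aw _]; lra.
  have ALab w : w \in `[a, b] -> `|A w| <= L.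
    rewrite in_itv /= => /andP[aw wb]; apply: AL.
    by rewrite in_itv /=; apply/andP; split; lra.
  apply: (linear_ode_vanish_segment ab pab ALab ab_small _ _ Xp).
    by move=> i j; apply: continuous_subspaceW sub _; exact: X_continuous.
  by move=> w; rewrite in_itv /= => /andP[aw _]; apply: X_derive; lra.
have [pv|vp] := leP p v.
- rewrite ger0_norm ?subr_ge0 // in small.
  by apply: (vanish p v) => //; rewrite in_itv /= lexx pv.
- have {}vp := ltW vp; rewrite distrC ger0_norm ?subr_ge0 // in small.
  by apply: (vanish v p) => //; rewrite in_itv /= lexx vp.
Qed.

(* Walk from [t0] to [u] in [N] steps, each short enough for [linear_ode_vanish_near]. *)
Lemma linear_ode_uniq (t0 : R) :
  {within `[1, +oo[, continuous A} -> 1 <= t0 -> X t0 = 0 -> forall u, 1 <= u -> X u = 0.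
Proof.
move=> Ac t01 Xt0 u u1; pose m := t0 + u.
have [L AL] := continuous_bounded_segment m Ac.
have L0 : 0 <= L by apply: le_trans (AL 1 _); rewrite // in_itv /= lexx /m; lra.
pose K := (d * d)%:R * L.
have K0 : 0 <= K by rewrite mulr_ge0.
pose N := (Num.Def.archi_bound (2 * `|u - t0| * K)).+1.
have N0 : 0 < N%:R :> R by rewrite ltr0n.
have hN : 2 * `|u - t0| * K < N%:R.
  by apply: lt_le_trans (archi_boundP _) _; rewrite ?mulr_ge0 // ler_nat.
pose h := (u - t0) / N%:R.
have q_in n : (n <= N)%N -> 1 <= t0 + n%:R * h <= m.
  move=> nN; have al0 : 0 <= n%:R / N%:R :> R by rewrite divr_ge0.
  have al1 : n%:R / N%:R <= 1 :> R by rewrite ler_pdivrMr // mul1r ler_nat.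
  have -> : t0 + n%:R * h = t0 + n%:R / N%:R * (u - t0) by rewrite /h mulrA mulrAC.
  by rewrite /m; apply/andP; split; nra.
have Xq n : (n <= N)%N -> X (t0 + n%:R * h) = 0.
  elim: n => [|n IH] nN; first by rewrite mul0r addr0.
  apply: (linear_ode_vanish_near AL (q_in n (ltnW nN)) (q_in n.+1 nN) _ (IH (ltnW nN))).
  have -> : t0 + n.+1%:R * h - (t0 + n%:R * h) = h by rewrite -addn1 natrD; ring.
  rewrite /h normrM normfV (ger0_norm (ltW N0)) mulrAC ler_pdivrMr // -/K; lra.
have -> : u = t0 + N%:R * h by rewrite /h mulrC divfK ?gt_eqF // addrC subrK.
exact: Xq.
Qed.

End vanishing.

Lemma evolution_family_cocycle A (T : R -> R -> 'M[R]_d) :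
  {within `[1, +oo[, continuous A} -> evolution_family A T ->
  forall u t s, 1 <= u -> 1 <= t -> 1 <= s -> T u t *m T t s = T u s.
Proof.
move=> Ac [T1 Tc Td] u t s u1 t1 s1.
pose X v := T v t *m T t s - T v s.
have XE i j : (fun v => X v i j) =
    (fun v => \sum_(k < d) T v t i k * T t s k j - T v s i j).
  by apply/funext => v; rewrite /X !mxE.
suff : X u = 0 by move/eqP; rewrite subr_eq0 => /eqP.
apply: (linear_ode_uniq _ _ Ac t1) => //; last by rewrite /X T1 // mul1mx subrr.
- move=> i j; rewrite XE; apply/subspace_continuousP => v v1.
  have Tvc r r1 k l := (subspace_continuousP _ _).1
    (within_continuous_entry (i := k) (j := l) (Tc r r1)) v v1.
  apply: cvgB; last exact: Tvc.
  apply: cvg_big => [|k _]; first exact: add_continuous.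
  by apply: cvgMl; exact: Tvc.
- move=> v v1 i j; rewrite XE.
  have -> : (A v *m X v) i j =
      \sum_(k < d) (A v *m T v t) i k * T t s k j - (A v *m T v s) i j.
    by rewrite /X mulmxBr mulmxA !mxE.
  apply: is_deriveB; last exact: is_derive_entry (Td _ _ s1 v1) i j.
  rewrite -fct_sumE; apply: is_derive_sum => k.
  have -> : (fun w => T w t i k * T t s k j) = T t s k j \*: (fun w => T w t i k).
    by apply/funext => w; rewrite /= mulrC.
  by rewrite mulrC; apply: is_deriveZ; exact: is_derive_entry (Td _ _ t1 v1) i k.
Qed.

Lemma invariant_projections_commute (T : R -> R -> 'M[R]_d) (P : R -> 'M[R]_d) :
  (forall t, 1 <= t -> T t t = 1%:M) ->
  (forall u t s, 1 <= u -> 1 <= t -> 1 <= s -> T u t *m T t s = T u s) ->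
  invariant_projections T P ->
  forall t s, 1 <= t -> 1 <= s -> P t *m T t s = T t s *m P s.
Proof.
move=> T1 Tcoc [_ Pinv] t s t1 s1; have [st|ts] := leP s t; first exact: Pinv.
have := congr1 (fun M => T t s *m M *m T t s) (Pinv _ _ t1 (ltW ts)).
by rewrite !mulmxA Tcoc // T1 // mul1mx -!mulmxA Tcoc // T1 // mulmx1.
Qed.

End linear_ode.

Section sup_ge1.
Variable R : realType.

Definition sup_ge1 (f : R -> R) : R := sup [set f tau | tau in [set tau | 1 <= tau]].

Lemma sup_ge1_ub (f : R -> R) {tau : R} :
  (exists M, forall tau, 1 <= tau -> f tau <= M) -> 1 <= tau -> f tau <= sup_ge1 f.
Proof.
move=> [M fM] tau1; apply: sup_upper_bound; last by exists tau.
split; first by exists (f 1), 1 => //=.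
by exists M => _ [s s1 <-]; exact: fM.
Qed.

Lemma sup_ge1_le (f : R -> R) (c : R) :
  (forall tau, 1 <= tau -> f tau <= c) -> sup_ge1 f <= c.
Proof. by move=> fc; apply: ge_sup; [exists (f 1), 1 => //= | move=> _ [s s1 <-]; exact: fc]. Qed.

Lemma sup_ge1_cst (c : R) : sup_ge1 (fun=> c) = c.
Proof.
apply/le_anti; rewrite sup_ge1_le //=.
by apply: (sup_ge1_ub (f := fun=> c)) (lexx 1); exists c.
Qed.

Variables (V : lmodType R) (g : R -> V -> R).
Hypothesis g_bounded : forall x, exists M, forall tau, 1 <= tau -> g tau x <= M.
Hypothesis gZ : forall tau k x, g tau (k *: x) = `|k| * g tau x.
Hypothesis gD : forall tau x y, g tau (x + y) <= g tau x + g tau y.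

Lemma sup_ge1Z k x : sup_ge1 (g^~ (k *: x)) = `|k| * sup_ge1 (g^~ x).
Proof.
have le_scale c y : sup_ge1 (g^~ (c *: y)) <= `|c| * sup_ge1 (g^~ y).
  apply: sup_ge1_le => tau tau1; rewrite gZ ler_wpM2l //.
  exact: (sup_ge1_ub (f := g^~ y) (g_bounded y) tau1).
apply/le_anti; rewrite le_scale /=.
have [->|k0] := eqVneq k 0.
  rewrite normr0 mul0r scale0r; apply: le_trans _ (sup_ge1_ub (f := g^~ 0) (g_bounded 0) (lexx 1)).
  by rewrite -(scale0r (0 : V)) gZ normr0 mul0r.
have := le_scale k^-1 (k *: x); rewrite scalerA mulVf // scale1r normfV => h.
by rewrite -ler_pdivlMl ?normr_gt0.
Qed.

Lemma sup_ge1D x y : sup_ge1 (g^~ (x + y)) <= sup_ge1 (g^~ x) + sup_ge1 (g^~ y).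
Proof.
apply: sup_ge1_le => tau tau1; apply: le_trans (gD _ _ _) _.
by apply: lerD; apply: sup_ge1_ub.
Qed.

End sup_ge1.

Section lyapunov_norm.
Variables (R : realType) (d : nat) (N : 'cV[R]_d -> R).
Variables (T : R -> R -> 'M[R]_d) (P : R -> 'M[R]_d) (lam a : R).

Definition stable_term (t tau : R) (x : 'cV[R]_d) : R :=
  N (T tau t *m P t *m x) * poly_weight lam a (tau / t).

Definition unstable_term (t sig : R) (x : 'cV[R]_d) : R :=
  N (T sig t *m (1%:M - P t) *m x) * poly_weight lam a (t / sig).

Definition stable_part (t : R) (x : 'cV[R]_d) : R := sup_ge1 (stable_term t ^~ x).

Definition unstable_part (t : R) (x : 'cV[R]_d) : R := sup_ge1 (unstable_term t ^~ x).

Definition lyapunov_norm (t : R) (x : 'cV[R]_d) : R := stable_part t x + unstable_part t x.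

Hypothesis normN : is_norm N.
Hypothesis T_id : forall t, 1 <= t -> T t t = 1%:M.
Hypothesis T_cocycle : forall u t s, 1 <= u -> 1 <= t -> 1 <= s -> T u t *m T t s = T u s.
Hypothesis P_idem : forall t, 1 <= t -> P t *m P t = P t.
Hypothesis P_commute : forall t s, 1 <= t -> 1 <= s -> P t *m T t s = T t s *m P s.
Hypotheses (lam_ge0 : 0 <= lam) (lam_le_a : lam <= a).
Variables (K eps : R).
Hypotheses (K_gt0 : 0 < K) (eps_ge0 : 0 <= eps).
Hypothesis dichotomy : forall t s, 1 <= s -> s <= t ->
  [/\ opnorm N (T t s *m P s) <= K * (t / s) `^ (- lam) * s `^ eps,
      opnorm N (T s t *m (1%:M - P t)) <= K * (t / s) `^ (- lam) * t `^ eps,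
      opnorm N (T t s) <= K * (t / s) `^ a * s `^ eps &
      opnorm N (T s t) <= K * (t / s) `^ a * t `^ eps].

Lemma projection_norms_le t x : 1 <= t ->
  N (P t *m x) <= K * t `^ eps * N x /\ N ((1%:M - P t) *m x) <= K * t `^ eps * N x.
Proof.
move=> t1; have t0 : 0 < t := lt_le_trans ltr01 t1.
have [+ + _ _] := dichotomy t1 (lexx t).
rewrite divff ?gt_eqF // powR1 mulr1 T_id // !mul1mx => hP hQ.
by split; apply: le_trans (opnorm_ub normN _ _) _; rewrite ler_wpM2r ?is_norm_ge0.
Qed.

Local Notation B t := ((K + K * K) * t `^ (eps + eps)).

Lemma lyapunov_constant_ge t : 1 <= t ->
  K * t `^ eps <= B t /\ K * t `^ eps * (K * t `^ eps) <= B t.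
Proof.
move=> t1; have t0 : 0 < t := lt_le_trans ltr01 t1.
have te : t `^ eps <= t `^ (eps + eps) by rewrite ler_powR // lerDl.
have tee : t `^ (eps + eps) = t `^ eps * t `^ eps.
  by rewrite powRD // (gt_eqF t0) implybT.
have K0 := ltW K_gt0; have Kt0 : 0 <= t `^ eps := powR_ge0 _ _.
split; first by rewrite ler_pM // ?lerDl ?mulr_ge0.
by rewrite tee mulrACA ler_wpM2r ?mulr_ge0 // lerDr.
Qed.

Lemma stable_term_le t tau x : 1 <= t -> 1 <= tau -> stable_term t tau x <= B t * N x.
Proof.
rewrite /stable_term => t1 tau1; have t0 : 0 < t := lt_le_trans ltr01 t1.
have tau0 : 0 < tau := lt_le_trans ltr01 tau1.
have [KB KKB] := lyapunov_constant_ge t1.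
have [NP _] := projection_norms_le x t1.
have Kt0 : 0 <= K * t `^ eps by rewrite mulr_ge0 ?powR_ge0 ?ltW.
have [t_tau|tau_t] := leP t tau.
- have [+ _ _ _] := dichotomy t1 t_tau => hTP.
  apply: le_trans (_ : K * t `^ eps * N x <= _); last by rewrite ler_wpM2r ?is_norm_ge0.
  apply: (ler_pM_cancel (e := (tau / t) `^ (- lam)) (f := (tau / t) `^ lam)).
  + by rewrite mulr_ge0 ?is_norm_ge0.
  + exact: powR_ge0.
  + exact: poly_weight_ge0.
  + apply: le_trans (opnorm_ub normN _ _) _.
    by rewrite mulrAC ler_wpM2r ?is_norm_ge0 // mulrAC.
  + by rewrite /poly_weight ge_min lexx.
  + by rewrite powRN_mul // divr_gt0.
- have [_ _ _ hT] := dichotomy tau1 (ltW tau_t).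
  apply: le_trans (_ : K * t `^ eps * (K * t `^ eps * N x) <= _); last first.
    by rewrite mulrA ler_wpM2r ?is_norm_ge0.
  apply: le_trans (_ : K * t `^ eps * N (P t *m x) <= _); last by rewrite ler_wpM2l.
  apply: (ler_pM_cancel (e := (t / tau) `^ a) (f := (tau / t) `^ a)).
  + by rewrite mulr_ge0 ?is_norm_ge0.
  + exact: powR_ge0.
  + exact: poly_weight_ge0.
  + rewrite -mulmxA; apply: le_trans (opnorm_ub normN _ _) _.
    by rewrite mulrAC ler_wpM2r ?is_norm_ge0 // mulrAC.
  + by rewrite /poly_weight ge_min lexx orbT.
  + by rewrite -[t / tau]invf_div mulrC powR_mulV // divr_gt0.
Qed.

Lemma unstable_term_le t sig x : 1 <= t -> 1 <= sig -> unstable_term t sig x <= B t * N x.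
Proof.
rewrite /unstable_term => t1 sig1; have t0 : 0 < t := lt_le_trans ltr01 t1.
have sig0 : 0 < sig := lt_le_trans ltr01 sig1.
have [KB KKB] := lyapunov_constant_ge t1.
have [_ NQ] := projection_norms_le x t1.
have Kt0 : 0 <= K * t `^ eps by rewrite mulr_ge0 ?powR_ge0 ?ltW.
have [sig_t|t_sig] := leP sig t.
- have [_ + _ _] := dichotomy sig1 sig_t => hTQ.
  apply: le_trans (_ : K * t `^ eps * N x <= _); last by rewrite ler_wpM2r ?is_norm_ge0.
  apply: (ler_pM_cancel (e := (t / sig) `^ (- lam)) (f := (t / sig) `^ lam)).
  + by rewrite mulr_ge0 ?is_norm_ge0.
  + exact: powR_ge0.
  + exact: poly_weight_ge0.
  + apply: le_trans (opnorm_ub normN _ _) _.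
    by rewrite mulrAC ler_wpM2r ?is_norm_ge0 // mulrAC.
  + by rewrite /poly_weight ge_min lexx.
  + by rewrite powRN_mul // divr_gt0.
- have [_ _ hT _] := dichotomy t1 (ltW t_sig).
  apply: le_trans (_ : K * t `^ eps * (K * t `^ eps * N x) <= _); last first.
    by rewrite mulrA ler_wpM2r ?is_norm_ge0.
  apply: le_trans (_ : K * t `^ eps * N ((1%:M - P t) *m x) <= _); last by rewrite ler_wpM2l.
  apply: (ler_pM_cancel (e := (sig / t) `^ a) (f := (t / sig) `^ a)).
  + by rewrite mulr_ge0 ?is_norm_ge0.
  + exact: powR_ge0.
  + exact: poly_weight_ge0.
  + rewrite -mulmxA; apply: le_trans (opnorm_ub normN _ _) _.
    by rewrite mulrAC ler_wpM2r ?is_norm_ge0 // mulrAC.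
  + by rewrite /poly_weight ge_min lexx orbT.
  + by rewrite -[sig / t]invf_div mulrC powR_mulV // divr_gt0.
Qed.

Lemma stable_partZ t k x : 1 <= t -> stable_part t (k *: x) = `|k| * stable_part t x.
Proof.
move=> t1; apply: (sup_ge1Z (g := stable_term t)).
- by move=> y; exists (B t * N y) => tau tau1; exact: stable_term_le.
- by move=> tau k' y; rewrite /stable_term -scalemxAr is_normZ // mulrA.
Qed.

Lemma stable_partD t x y : 1 <= t ->
  stable_part t (x + y) <= stable_part t x + stable_part t y.
Proof.
move=> t1; apply: (sup_ge1D (g := stable_term t)).
- by move=> z; exists (B t * N z) => tau tau1; exact: stable_term_le.
- move=> tau z w; rewrite /stable_term (mulmxDr _ z w) -mulrDl ler_wpM2r ?poly_weight_ge0 //.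
  exact: is_norm_triangle.
Qed.

Lemma unstable_partZ t k x : 1 <= t -> unstable_part t (k *: x) = `|k| * unstable_part t x.
Proof.
move=> t1; apply: (sup_ge1Z (g := unstable_term t)).
- by move=> y; exists (B t * N y) => sig sig1; exact: unstable_term_le.
- by move=> sig k' y; rewrite /unstable_term -scalemxAr is_normZ // mulrA.
Qed.

Lemma unstable_partD t x y : 1 <= t ->
  unstable_part t (x + y) <= unstable_part t x + unstable_part t y.
Proof.
move=> t1; apply: (sup_ge1D (g := unstable_term t)).
- by move=> z; exists (B t * N z) => sig sig1; exact: unstable_term_le.
- move=> sig z w; rewrite /unstable_term (mulmxDr _ z w) -mulrDl ler_wpM2r ?poly_weight_ge0 //.
  exact: is_norm_triangle.
Qed.

Lemma stable_part_ub t tau x : 1 <= t -> 1 <= tau -> stable_term t tau x <= stable_part t x.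
Proof.
move=> t1 tau1; apply: (sup_ge1_ub (f := stable_term t ^~ x) _ tau1).
by exists (B t * N x) => tau' tau1'; exact: stable_term_le.
Qed.

Lemma unstable_part_ub t sig x : 1 <= t -> 1 <= sig ->
  unstable_term t sig x <= unstable_part t x.
Proof.
move=> t1 sig1; apply: (sup_ge1_ub (f := unstable_term t ^~ x) _ sig1).
by exists (B t * N x) => sig' sig1'; exact: unstable_term_le.
Qed.

Lemma stable_part_ge0 t x : 1 <= t -> 0 <= stable_part t x.
Proof.
move=> t1; apply: le_trans (stable_part_ub x t1 t1).
by rewrite mulr_ge0 ?poly_weight_ge0 ?is_norm_ge0.
Qed.

Lemma unstable_part_ge0 t x : 1 <= t -> 0 <= unstable_part t x.
Proof.
move=> t1; apply: le_trans (unstable_part_ub x t1 t1).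
by rewrite mulr_ge0 ?poly_weight_ge0 ?is_norm_ge0.
Qed.

Lemma lyapunov_norm_ge t x : 1 <= t -> N x <= lyapunov_norm t x.
Proof.
move=> t1; have t0 : 0 < t := lt_le_trans ltr01 t1.
have := lerD (stable_part_ub x t1 t1) (unstable_part_ub x t1 t1).
rewrite /stable_term /unstable_term divff ?gt_eqF // poly_weight1 !mulr1 T_id // !mul1mx.
apply: le_trans.
by apply: le_trans _ (is_norm_triangle normN _ _); rewrite -mulmxDl addrC subrK mul1mx.
Qed.

Lemma lyapunov_norm_le t x : 1 <= t -> lyapunov_norm t x <= (B t + B t) * N x.
Proof.
move=> t1; rewrite mulrDl; apply: lerD; apply: sup_ge1_le => tau tau1.
  exact: stable_term_le.
exact: unstable_term_le.
Qed.

Lemma lyapunov_norm_is_norm t : 1 <= t -> is_norm (lyapunov_norm t).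
Proof.
move=> t1; split.
- by move=> x; rewrite addr_ge0 ?stable_part_ge0 ?unstable_part_ge0.
- move=> x n0; apply: (is_norm_eq0 normN); apply/le_anti.
  by rewrite is_norm_ge0 // andbT -n0 lyapunov_norm_ge.
- by move=> k x; rewrite /lyapunov_norm stable_partZ // unstable_partZ // mulrDr.
- move=> x y; rewrite /lyapunov_norm addrACA.
  by apply: lerD; [exact: stable_partD | exact: unstable_partD].
Qed.

Lemma stable_part_transport t s y c : 1 <= t -> 1 <= s -> 0 <= c ->
  (forall tau, 1 <= tau -> poly_weight lam a (tau / t) <= c * poly_weight lam a (tau / s)) ->
  stable_part t (T t s *m y) <= c * stable_part s y.
Proof.
move=> t1 s1 c0 hw; apply: sup_ge1_le => tau tau1; rewrite /stable_term.
rewrite mulmxA -(mulmxA _ (P t)) P_commute // mulmxA T_cocycle //.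
apply: le_trans (_ : N (T tau s *m P s *m y) * (c * poly_weight lam a (tau / s)) <= _).
  by rewrite ler_wpM2l ?is_norm_ge0 ?hw.
by rewrite mulrCA ler_wpM2l ?stable_part_ub.
Qed.

Lemma unstable_part_transport t s y c : 1 <= t -> 1 <= s -> 0 <= c ->
  (forall sig, 1 <= sig -> poly_weight lam a (t / sig) <= c * poly_weight lam a (s / sig)) ->
  unstable_part t (T t s *m y) <= c * unstable_part s y.
Proof.
move=> t1 s1 c0 hw; apply: sup_ge1_le => sig sig1.
have Q_commute : (1%:M - P t) *m T t s = T t s *m (1%:M - P s).
  by rewrite mulmxBl mulmxBr mul1mx mulmx1 P_commute.
rewrite /unstable_term mulmxA -(mulmxA _ (1%:M - P t)) Q_commute mulmxA T_cocycle //.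
apply: le_trans (_ : N (T sig s *m (1%:M - P s) *m y) * (c * poly_weight lam a (s / sig)) <= _).
  by rewrite ler_wpM2l ?is_norm_ge0 ?hw.
by rewrite mulrCA ler_wpM2l ?unstable_part_ub.
Qed.

Lemma lyapunov_norm_transport t s y c1 c2 : 1 <= t -> 1 <= s -> 0 <= c1 -> 0 <= c2 ->
  (forall tau, 1 <= tau -> poly_weight lam a (tau / t) <= c1 * poly_weight lam a (tau / s)) ->
  (forall sig, 1 <= sig -> poly_weight lam a (t / sig) <= c2 * poly_weight lam a (s / sig)) ->
  lyapunov_norm t (T t s *m y) <= c1 * stable_part s y + c2 * unstable_part s y.
Proof.
move=> t1 s1 c10 c20 hs hu.
by apply: lerD; [exact: stable_part_transport | exact: unstable_part_transport].
Qed.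

Lemma stable_part_P t x : 1 <= t -> stable_part t (P t *m x) = stable_part t x.
Proof.
move=> t1; congr sup_ge1; apply/funext => tau.
by rewrite /stable_term mulmxA -(mulmxA (T tau t)) P_idem.
Qed.

Lemma unstable_part_P t x : 1 <= t -> unstable_part t (P t *m x) = 0.
Proof.
move=> t1; rewrite -[RHS](sup_ge1_cst 0); congr sup_ge1; apply/funext => sig.
rewrite /unstable_term mulmxA -(mulmxA (T sig t)) mulmxBl mul1mx P_idem // subrr mulmx0 mul0mx.
by rewrite is_norm0 // mul0r.
Qed.

Lemma stable_part_Q t x : 1 <= t -> stable_part t ((1%:M - P t) *m x) = 0.
Proof.
move=> t1; rewrite -[RHS](sup_ge1_cst 0); congr sup_ge1; apply/funext => tau.
rewrite /stable_term mulmxA -(mulmxA (T tau t)) mulmxBr mulmx1 P_idem // subrr mulmx0 mul0mx.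
by rewrite is_norm0 // mul0r.
Qed.

Lemma unstable_part_Q t x : 1 <= t ->
  unstable_part t ((1%:M - P t) *m x) = unstable_part t x.
Proof.
move=> t1; have QQ : (1%:M - P t) *m (1%:M - P t) = 1%:M - P t.
  by rewrite mulmxBr mulmx1 mulmxBl mul1mx P_idem // subrr subr0.
by congr sup_ge1; apply/funext => sig; rewrite /unstable_term mulmxA -(mulmxA (T sig t)) QQ.
Qed.

Lemma lyapunov_norm_dichotomy t s x : 1 <= s -> s <= t ->
  [/\ lyapunov_norm t (T t s *m P s *m x) <= (t / s) `^ (- lam) * lyapunov_norm s x,
      lyapunov_norm s (T s t *m (1%:M - P t) *m x) <= (t / s) `^ (- lam) * lyapunov_norm t x,
      lyapunov_norm t (T t s *m x) <= (t / s) `^ a * lyapunov_norm s x &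
      lyapunov_norm s (T s t *m x) <= (t / s) `^ a * lyapunov_norm t x].
Proof.
move=> s1 st; have t1 := le_trans s1 st; have s0 : 0 < s := lt_le_trans ltr01 s1.
have sst : 0 < s <= t by rewrite s0.
have r1 : 1 <= t / s by rewrite ler_pdivlMr // mul1r.
have rl0 : 0 <= (t / s) `^ (- lam) := powR_ge0 _ _.
have ra0 : 0 <= (t / s) `^ a := powR_ge0 _ _.
have rla := powRN_le_powR r1 lam_ge0 (le_trans lam_ge0 lam_le_a).
have W_div u : 1 <= u -> _ := fun u1 => poly_weight_div_ratio lam_le_a sst (le_trans ler01 u1).
have W_rat u : 1 <= u -> _ := fun u1 => poly_weight_ratio_div lam_le_a sst (lt_le_trans ltr01 u1).
have weaken w1 w2 : w1 <= (t / s) `^ (- lam) * w2 -> 0 <= w2 -> w1 <= (t / s) `^ a * w2.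
  by move=> h w20; apply: le_trans h _; rewrite ler_wpM2r.
split.
- rewrite -mulmxA.
  apply: le_trans (lyapunov_norm_transport _ t1 s1 rl0 ra0 _ _) _.
  + by move=> tau /W_div [].
  + by move=> sig /W_rat [].
  rewrite stable_part_P // unstable_part_P // mulr0 addr0 ler_wpM2l //.
  by rewrite lerDl unstable_part_ge0.
- rewrite -mulmxA.
  apply: le_trans (lyapunov_norm_transport _ s1 t1 ra0 rl0 _ _) _.
  + by move=> tau /W_div [].
  + by move=> sig /W_rat [].
  rewrite stable_part_Q // unstable_part_Q // mulr0 add0r ler_wpM2l //.
  by rewrite lerDr stable_part_ge0.
- rewrite /lyapunov_norm mulrDr; apply: lyapunov_norm_transport => //.
  + by move=> tau /W_div [+ _] => /weaken; apply; exact: poly_weight_ge0.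
  + by move=> sig /W_rat [].
- rewrite /lyapunov_norm mulrDr; apply: lyapunov_norm_transport => //.
  + by move=> tau /W_div [].
  + by move=> sig /W_rat [+ _] => /weaken; apply; exact: poly_weight_ge0.
Qed.

End lyapunov_norm.

Lemma nonuniform_of_norm_family (R : realType) (d : nat) (T : R -> R -> 'M[R]_d)
    (N : 'cV[R]_d -> R) (Nt : R -> 'cV[R]_d -> R) (C delta : R) :
  is_norm N -> strong_poly_dichotomy_wrt Nt T -> 0 < C -> 0 <= delta ->
  (forall t x, 1 <= t -> N x <= Nt t x /\ Nt t x <= C * t `^ delta * N x) ->
  nonuniform_strong_poly_dichotomy N T.
Proof.
move=> normN [K [a [lam [P [K0 lam0 [lam_a Pinv] hb]]]]] C0 delta0 hC.
have transfer (M : 'M[R]_d) r w v : 1 <= w -> 1 <= v -> 0 <= r ->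
    (forall x, Nt w (M *m x) <= K * r * Nt v x) -> opnorm N M <= K * C * r * v `^ delta.
  move=> w1 v1 r0 hM; apply: opnorm_le => // [|x].
    by rewrite !mulr_ge0 ?powR_ge0 ?(ltW K0) ?(ltW C0).
  have [NM _] := hC w (M *m x) w1; have [_ Nx] := hC v x v1.
  apply: le_trans NM _; apply: le_trans (hM x) _.
  by rewrite -!mulrA ler_wpM2l ?(ltW K0) // mulrCA ler_wpM2l // mulrA.
exists (K * C), a, lam, delta, P; split => //; first by rewrite mulr_gt0.
move=> t s s1 st; have t1 := le_trans s1 st.
split; [apply: (transfer _ _ t s) | apply: (transfer _ _ s t) |
       apply: (transfer _ _ t s) | apply: (transfer _ _ s t)];
  rewrite ?powR_ge0 // => x; by have [? ? ? ?] := hb t s x s1 st.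
Qed.

Lemma norm_family_of_nonuniform (R : realType) (d : nat) (A : R -> 'M[R]_d)
    (T : R -> R -> 'M[R]_d) (N : 'cV[R]_d -> R) :
  {within `[1, +oo[, continuous A} -> evolution_family A T -> is_norm N ->
  nonuniform_strong_poly_dichotomy N T ->
  exists Nt : R -> 'cV[R]_d -> R,
    (forall t, 1 <= t -> is_norm (Nt t)) /\ strong_poly_dichotomy_wrt Nt T /\
    exists (C delta : R), 0 < C /\ 0 <= delta /\
      forall t x, 1 <= t -> N x <= Nt t x /\ Nt t x <= C * t `^ delta * N x.
Proof.
move=> Ac evT normN [K [a [lam [eps [P [K0 lam0 lam_a [eps0 Pinv] hb]]]]]].
have [T1 _ _] := evT; have Tcoc := evolution_family_cocycle Ac evT.
have Pcomm := invariant_projections_commute T1 Tcoc Pinv.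
have Pidem := Pinv.1; have lam_ge0 := ltW lam0.
exists (lyapunov_norm N T P lam a); split.
  by move=> t t1; exact: (lyapunov_norm_is_norm normN T1 K0 eps0 hb t1).
split.
  exists 1, a, lam, P; split => // t s x s1 st.
  rewrite !mul1r.
  exact: (lyapunov_norm_dichotomy normN T1 Tcoc Pidem Pcomm lam_ge0 lam_a K0 eps0 hb x s1 st).
exists ((K + K * K) + (K + K * K)), (eps + eps).
split; first by rewrite addr_gt0 // ltr_wpDr // mulr_ge0 // ltW.
split; first by rewrite addr_ge0.
move=> t x t1; split; first exact: (lyapunov_norm_ge normN T1 K0 eps0 hb x t1).
by rewrite mulrDl; exact: (lyapunov_norm_le normN T1 K0 eps0 hb x t1).
Qed.

Theorem proposition5p1 (R : realType) (d : nat)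
    (A : R -> 'M[R]_d) (T : R -> R -> 'M[R]_d) (N : 'cV[R]_d -> R) :
  {within `[1, +oo[, continuous A} ->
  evolution_family A T ->
  is_norm N ->
  (nonuniform_strong_poly_dichotomy N T <->
   exists Nt : R -> 'cV[R]_d -> R,
     (forall t, 1 <= t -> is_norm (Nt t)) /\
     strong_poly_dichotomy_wrt Nt T /\
     exists (C delta : R), 0 < C /\ 0 <= delta /\
       forall t (x : 'cV[R]_d), 1 <= t ->
         N x <= Nt t x /\ Nt t x <= C * t `^ delta * N x).
Proof.
move=> Ac evT normN; split; first exact: norm_family_of_nonuniform.
move=> [Nt [_ [dichNt [C [delta [C0 [delta0 hC]]]]]]].
exact: (nonuniform_of_norm_family normN dichNt C0 delta0 hC).
Qed.
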